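(* There exists $C\in(0,\infty)$ such that for all $N\in\mathbb N$, $\lambda\in(0,\infty)$, $n\in\mathbb N$ with $U_{N,\lambda}(n)>0$, and $M>0$, $$\sum_{x\in\mathbb Z^d:\,|x|>M\sqrt n}\frac{\mathbf U_{N,\lambda}(n,x)}{U_{N,\lambda}(n)}\le\frac{C}{M^2}.$$
   Context: Setting: $d\in\mathbb N$, $\mathsf c>0$; positive $r(n)=\frac an(1+o(1))$, $R_N=\sum_{n\le N}r(n)$; probability kernels $p(n,\cdot)$ on $\mathbb Z^d$ with (i) $\sum_xx_ip(n,x)=0$ for each $i$, (ii) $\sum_x|x|^2p(n,x)=O(n)$, (iii) $\sup_x|n^{d/2}p(n,x)-g_{\mathsf c}(x/\sqrt n)|=o(1)$ with $g_t(x)=(2\pi t)^{-d/2}e^{-|x|^2/(2t)}$. $(T^{(N)}_i,X^{(N)}_i)$ i.i.d. with law $\frac{r(n)p(n,x)}{R_N}\mathbf1_{\{1,\dots,N\}}(n)$; $\tau^{(N)}_k$, $S^{(N)}_k$ their partial sums. $\mathbf U_{N,\lambda}(n,x):=\sum_{k\ge0}\lambda^k\P(\tau^{(N)}_k=n,S^{(N)}_k=x)$ and $U_{N,\lambda}(n):=\sum_{k\ge0}\lambda^k\P(\tau^{(N)}_k=n)=\sum_x\mathbf U_{N,\lambda}(n,x)$. *)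

From Stdlib Require Import Reals List ZArith Arith Lra ClassicalEpsilon.
Open Scope R_scope.

Fixpoint lsum {A : Type} (f : A -> R) (L : list A) : R :=
  match L with nil => 0 | a :: L' => f a + lsum f L' end.

Definition fin_sums {A : Type} (P : A -> Prop) (f : A -> R) (s : R) : Prop :=
  exists L : list A, NoDup L /\ Forall P L /\ s = lsum f L.

(** For nonnegative f, "sum_{a : P a} f a = s" means s is the sup of finite partial sums. *)
Definition HasSum {A : Type} (P : A -> Prop) (f : A -> R) (s : R) : Prop :=
  is_lub (fin_sums P f) s.

(** The (nonnegative) series sum_{a : P a} f a  (its value is only meaningful when it
    converges, which is always the case where it is used below). *)
Definition nnsum {A : Type} (P : A -> Prop) (f : A -> R) : R :=
  epsilon (inhabits 0) (fun s => HasSum P f s).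

(** All finite partial sums are bounded by B, i.e. sum_{a : P a} f a <= B for f >= 0. *)
Definition fsum_le {A : Type} (P : A -> Prop) (f : A -> R) (B : R) : Prop :=
  forall L : list A, NoDup L -> Forall P L -> lsum f L <= B.

Definition Zd (d : nat) (x : list Z) : Prop := length x = d.

Definition coord (x : list Z) (i : nat) : R := IZR (nth i x 0%Z).

Fixpoint sqnormR (v : list R) : R :=
  match v with nil => 0 | a :: v' => a ^ 2 + sqnormR v' end.

Definition toR (x : list Z) : list R := map IZR x.

Definition znorm (x : list Z) : R := sqrt (sqnormR (toR x)).

Fixpoint vsub (x y : list Z) : list Z :=
  match x, y with
  | a :: x', b :: y' => (a - b)%Z :: vsub x' y'
  | _, _ => nil
  end.

Definition zerov (d : nat) : list Z := repeat 0%Z d.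

Definition gauss (d : nat) (t : R) (v : list R) : R :=
  / (sqrt (2 * PI * t)) ^ d * exp (- sqnormR v / (2 * t)).

Definition RN (r : nat -> R) (N : nat) : R := lsum r (seq 1 N).

(** Law of (T^(N), X^(N)):  r(m) p(m,y) / R_N * 1_{1..N}(m). *)
Definition law (r : nat -> R) (p : nat -> list Z -> R) (N m : nat) (y : list Z) : R :=
  if ((1 <=? m)%nat && (m <=? N)%nat)%bool then r m * p m y / RN r N else 0.

(** conv k n x = P(tau_k = n, S_k = x)  (k-fold convolution of the law). *)
Fixpoint conv (d : nat) (r : nat -> R) (p : nat -> list Z -> R) (N k n : nat)
  (x : list Z) : R :=
  match k with
  | O => if Nat.eq_dec n 0 then (if list_eq_dec Z.eq_dec x (zerov d) then 1 else 0)
         else 0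
  | S k' => lsum (fun m => nnsum (Zd d)
                    (fun y => law r p N m y * conv d r p N k' (n - m) (vsub x y)))
                 (seq 1 n)
  end.

Definition Ubold (d : nat) (r : nat -> R) (p : nat -> list Z -> R) (N : nat) (lam : R)
  (n : nat) (x : list Z) : R :=
  nnsum (fun _ : nat => True) (fun k => lam ^ k * conv d r p N k n x).

Definition Uscal (d : nat) (r : nat -> R) (p : nat -> list Z -> R) (N : nat) (lam : R)
  (n : nat) : R :=
  nnsum (fun _ : nat => True)
    (fun k => lam ^ k * nnsum (Zd d) (fun x => conv d r p N k n x)).

From Stdlib Require Import Reals List ZArith Arith Lra Lia ClassicalEpsilon Classical
  FunctionalExtensionality.
Open Scope R_scope.

(* Only the centering (i) and the second-moment bound (ii) are needed: the estimate is
   Chebyshev's inequality for a second-moment bound.  With K the constant of (ii), one step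
   (T, X) of the walk satisfies E[|X|^2; T = m] <= K m P(T = m).  The steps being centered,
   the cross term of |S + X|^2 = |S|^2 + 2 S.X + |X|^2 averages out, so by induction on k,
   E[|S_k|^2; tau_k = n] <= K n P(tau_k = n).  Weighting by lambda^k and summing over k gives
   sum_x |x|^2 U(n,x) <= K n U(n), and Chebyshev gives the bound with C = K + 1.
   All series are series of nonnegative terms, so the cross term is summed through the
   positive and negative parts of the coordinates. *)

Definition classic_dec {A : Type} (x y : A) : {x = y} + {x <> y} :=
  excluded_middle_informative (x = y).

Lemma lsum_plus {A} (f g : A -> R) L :
  lsum (fun a => f a + g a) L = lsum f L + lsum g L.
Proof. induction L; simpl; [ring | rewrite IHL; ring]. Qed.

Lemma lsum_scal {A} (c : R) (f : A -> R) L : lsum (fun a => c * f a) L = c * lsum f L.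
Proof. induction L; simpl; [ring | rewrite IHL; ring]. Qed.

Lemma lsum_ext {A} (f g : A -> R) L :
  (forall a, In a L -> f a = g a) -> lsum f L = lsum g L.
Proof.
  induction L; simpl; intros H; [reflexivity|].
  rewrite H, IHL by auto. reflexivity.
Qed.

Lemma lsum_le {A} (f g : A -> R) L :
  (forall a, In a L -> f a <= g a) -> lsum f L <= lsum g L.
Proof.
  induction L; simpl; intros H; [lra|].
  assert (f a <= g a) by auto. assert (lsum f L <= lsum g L) by auto. lra.
Qed.

Lemma lsum_nonneg {A} (f : A -> R) L :
  (forall a, In a L -> 0 <= f a) -> 0 <= lsum f L.
Proof.
  induction L; simpl; intros H; [lra|].
  assert (0 <= f a) by auto. assert (0 <= lsum f L) by auto. lra.
Qed.

Lemma lsum_zero {A} (L : list A) : lsum (fun _ => 0) L = 0.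
Proof. induction L; simpl; [reflexivity | rewrite IHL; ring]. Qed.

Lemma lsum_map {A B} (f : B -> R) (g : A -> B) L :
  lsum f (map g L) = lsum (fun a => f (g a)) L.
Proof. induction L; simpl; [reflexivity | rewrite IHL; reflexivity]. Qed.

Lemma lsum_nonneg_eq0 {A} (f : A -> R) L :
  (forall a, In a L -> 0 <= f a) -> lsum f L <= 0 -> forall a, In a L -> f a = 0.
Proof.
  induction L as [|b L IH]; simpl; intros H0 Hs a Ha; [contradiction|].
  assert (0 <= f b) by auto.
  assert (0 <= lsum f L) by (apply lsum_nonneg; auto).
  destruct Ha as [<-|Ha]; [lra|]. apply IH; auto. lra.
Qed.

Lemma lsum_remove_le {A} (f : A -> R) a L :
  (forall b, In b L -> 0 <= f b) -> In a L ->
  f a + lsum f (remove classic_dec a L) <= lsum f L.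
Proof.
  induction L as [|b L IH]; simpl; intros H Hin; [contradiction|].
  assert (0 <= f b) by auto.
  destruct (classic_dec a b) as [<-|ne]; simpl.
  - destruct (in_dec classic_dec a L) as [Ha|Ha].
    + assert (f a + lsum f (remove classic_dec a L) <= lsum f L) by auto. lra.
    + rewrite notin_remove by exact Ha. lra.
  - destruct Hin as [->|Hin]; [congruence|].
    assert (f a + lsum f (remove classic_dec a L) <= lsum f L) by auto. lra.
Qed.

Lemma lsum_incl {A} (f : A -> R) L1 L2 :
  NoDup L1 -> incl L1 L2 -> (forall b, In b L2 -> 0 <= f b) -> lsum f L1 <= lsum f L2.
Proof.
  revert L2; induction L1 as [|a L1 IH]; simpl; intros L2 Hnd Hinc H.
  - apply lsum_nonneg; auto.
  - apply NoDup_cons_iff in Hnd as [Ha Hnd].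
    assert (lsum f L1 <= lsum f (remove classic_dec a L2)).
    { apply IH; auto.
      - intros b Hb. apply in_in_remove; [intros ->; contradiction | apply Hinc; simpl; auto].
      - intros b Hb. apply in_remove in Hb. apply H; tauto. }
    assert (f a + lsum f (remove classic_dec a L2) <= lsum f L2)
      by (apply lsum_remove_le; auto; apply Hinc; simpl; auto).
    lra.
Qed.

Lemma lsum_markov {A} (f w : A -> R) L t B :
  0 <= t -> 0 <= B -> (forall x, In x L -> 0 <= f x /\ t < w x) ->
  lsum (fun x => w x * f x) L <= t * B -> lsum f L <= B.
Proof.
  intros Ht HB H Hs.
  assert (Hwf : forall x, In x L -> 0 <= w x * f x).
  { intros x Hx. destruct (H x Hx). apply Rmult_le_pos; lra. }
  destruct Ht as [Ht|<-].
  - assert (t * lsum f L <= t * B); [|nra].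
    rewrite <- lsum_scal. eapply Rle_trans; [|exact Hs].
    apply lsum_le. intros x Hx. destruct (H x Hx). nra.
  - rewrite (lsum_ext f (fun _ => 0)), lsum_zero; [lra|].
    intros x Hx. destruct (H x Hx).
    pose proof (lsum_nonneg_eq0 _ L Hwf ltac:(lra) x Hx). nra.
Qed.

(** * Series of nonnegative terms *)

Section Series.
Context {A : Type} (P : A -> Prop).

Lemma HasSum_lsum_le f s L : HasSum P f s -> NoDup L -> Forall P L -> lsum f L <= s.
Proof. intros [Hub _] Hnd HL. apply Hub. exists L; auto. Qed.

Lemma HasSum_le_bound f s B : HasSum P f s -> fsum_le P f B -> s <= B.
Proof. intros [_ Hlub] HB. apply Hlub. intros x [L [Hnd [HL ->]]]. apply HB; auto. Qed.

Lemma HasSum_unique f s t : HasSum P f s -> HasSum P f t -> s = t.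
Proof.
  intros Hs Ht. apply Rle_antisym.
  - apply (HasSum_le_bound f s t Hs). intros L Hnd HL. eapply HasSum_lsum_le; eauto.
  - apply (HasSum_le_bound f t s Ht). intros L Hnd HL. eapply HasSum_lsum_le; eauto.
Qed.

Lemma HasSum_of_fsum_le f B : fsum_le P f B -> exists s, HasSum P f s.
Proof.
  intros HB. destruct (completeness (fin_sums P f)) as [m Hm].
  - exists B. intros x [L [Hnd [HL ->]]]. apply HB; auto.
  - exists 0, nil. repeat constructor.
  - exists m. exact Hm.
Qed.

Lemma nnsum_eq f s : HasSum P f s -> nnsum P f = s.
Proof.
  intros Hs. apply (HasSum_unique f); [|exact Hs].
  apply (epsilon_spec (inhabits 0) (fun s => HasSum P f s)). eauto.
Qed.

Lemma HasSum_nnsum f s : HasSum P f s -> HasSum P f (nnsum P f).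
Proof. intros Hs. rewrite (nnsum_eq f s Hs). exact Hs. Qed.

Lemma HasSum_ge0 f s : HasSum P f s -> 0 <= s.
Proof. intros Hs. apply (HasSum_lsum_le f s nil Hs); constructor. Qed.

Lemma HasSum_point f s a :
  (forall x, P x -> 0 <= f x) -> HasSum P f s -> P a -> f a <= s.
Proof.
  intros Hf Hs Ha. replace (f a) with (lsum f (a :: nil)) by (simpl; ring).
  apply (HasSum_lsum_le f s); auto. constructor; [simpl; tauto | constructor].
Qed.

Lemma HasSum_ext f g s :
  (forall a, P a -> f a = g a) -> HasSum P f s -> HasSum P g s.
Proof.
  intros Hfg [Hub Hlub].
  assert (E : forall L, Forall P L -> lsum f L = lsum g L).
  { intros L HL. rewrite Forall_forall in HL. apply lsum_ext; auto. }
  split.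
  - intros x [L [Hnd [HL ->]]]. rewrite <- E by auto. apply Hub. exists L; auto.
  - intros b Hb. apply Hlub. intros x [L [Hnd [HL ->]]].
    rewrite E by auto. apply Hb. exists L; auto.
Qed.

Lemma HasSum_zero : HasSum P (fun _ => 0) 0.
Proof.
  split.
  - intros x [L [_ [_ ->]]]. rewrite lsum_zero. lra.
  - intros b Hb. apply Hb. exists nil. repeat constructor.
Qed.

Lemma HasSum_scal c f s : 0 <= c -> HasSum P f s -> HasSum P (fun a => c * f a) (c * s).
Proof.
  intros Hc Hs. split.
  - intros x [L [Hnd [HL ->]]]. rewrite lsum_scal.
    apply Rmult_le_compat_l; auto. eapply HasSum_lsum_le; eauto.
  - intros b Hb. destruct Hc as [Hc|<-].
    + assert (Hsb : s <= b / c).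
      { apply (HasSum_le_bound f s); auto. intros L Hnd HL.
        apply (Rmult_le_reg_l c); [lra|]. replace (c * (b / c)) with b by (field; lra).
        rewrite <- lsum_scal. apply Hb. exists L; auto. }
      apply (Rmult_le_compat_l c) in Hsb; [|lra].
      replace (c * (b / c)) with b in Hsb by (field; lra). exact Hsb.
    + rewrite Rmult_0_l. apply Hb. exists nil. simpl. repeat constructor.
Qed.

Lemma HasSum_plus f g s t :
  (forall a, P a -> 0 <= f a) -> (forall a, P a -> 0 <= g a) ->
  HasSum P f s -> HasSum P g t -> HasSum P (fun a => f a + g a) (s + t).
Proof.
  intros Hf Hg Hs Ht. split.
  - intros x [L [Hnd [HL ->]]]. rewrite lsum_plus.
    assert (lsum f L <= s) by (eapply HasSum_lsum_le; eauto).
    assert (lsum g L <= t) by (eapply HasSum_lsum_le; eauto). lra.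
  - intros b Hb. apply Rle_plus_epsilon. intros eps Heps.
    (* Take partial sums of f and g within eps/2 of s and t; their union bounds both. *)
    assert (Happrox : forall h u, HasSum P h u ->
              exists L, NoDup L /\ Forall P L /\ u - eps / 2 < lsum h L).
    { intros h u Hu. apply NNPP. intros Hno.
      assert (u <= u - eps / 2); [|lra].
      apply (HasSum_le_bound h u); auto. intros L Hnd HL.
      apply Rnot_lt_le. intros Hlt. apply Hno. exists L; auto. }
    destruct (Happrox f s Hs) as [L1 [Hnd1 [HL1 E1]]].
    destruct (Happrox g t Ht) as [L2 [Hnd2 [HL2 E2]]].
    set (L := nodup classic_dec (L1 ++ L2)).
    assert (HL : Forall P L).
    { rewrite Forall_forall in HL1, HL2 |- *. intros x Hx.
      apply nodup_In, in_app_or in Hx. destruct Hx; auto. }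
    assert (HLpos : forall h, (forall a, P a -> 0 <= h a) -> forall x, In x L -> 0 <= h x).
    { intros h Hh x Hx. apply Hh. rewrite Forall_forall in HL; auto. }
    assert (Hf1 : lsum f L1 <= lsum f L).
    { apply lsum_incl; auto. intros x Hx. apply nodup_In, in_or_app; auto. }
    assert (Hg2 : lsum g L2 <= lsum g L).
    { apply lsum_incl; auto. intros x Hx. apply nodup_In, in_or_app; auto. }
    assert (Hsum : lsum (fun a => f a + g a) L <= b).
    { apply Hb. exists L. split; [apply NoDup_nodup | auto]. }
    rewrite lsum_plus in Hsum. lra.
Qed.

Lemma HasSum_le_compat f g s t :
  (forall a, P a -> f a <= g a) -> HasSum P f s -> HasSum P g t -> s <= t.
Proof.
  intros Hfg Hs Ht. apply (HasSum_le_bound f s); auto. intros L Hnd HL.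
  apply Rle_trans with (lsum g L); [|eapply HasSum_lsum_le; eauto].
  rewrite Forall_forall in HL. apply lsum_le; auto.
Qed.

Lemma HasSum_dominated f g t :
  (forall a, P a -> f a <= g a) -> HasSum P g t -> HasSum P f (nnsum P f).
Proof.
  intros Hfg Ht. destruct (HasSum_of_fsum_le f t) as [s Hs].
  - intros L Hnd HL. apply Rle_trans with (lsum g L); [|eapply HasSum_lsum_le; eauto].
    rewrite Forall_forall in HL. apply lsum_le; auto.
  - exact (HasSum_nnsum f s Hs).
Qed.

Lemma HasSum_single f a :
  (forall x, P x -> x <> a -> f x = 0) -> 0 <= f a -> P a -> HasSum P f (f a).
Proof.
  intros Hzero Ha HPa.
  assert (Hout : forall L, Forall P L -> ~ In a L -> lsum f L = 0).
  { induction L as [|b L IH]; simpl; intros HL Hnin; [reflexivity|].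
    inversion HL; subst. rewrite Hzero, IH by tauto. ring. }
  split.
  - intros x [L [Hnd [HL ->]]]. induction L as [|b L IH]; simpl; [lra|].
    inversion Hnd; inversion HL; subst.
    destruct (classic_dec b a) as [->|ne].
    + rewrite Hout by auto. lra.
    + rewrite Hzero by auto. specialize (IH H2 H6). lra.
  - intros b Hb. apply Hb. exists (a :: nil). simpl.
    repeat constructor; auto. ring.
Qed.

End Series.

Lemma HasSum_lsum {A I} (P : A -> Prop) (F : I -> A -> R) (h : I -> R) Li :
  (forall i, In i Li -> forall a, P a -> 0 <= F i a) ->
  (forall i, In i Li -> HasSum P (F i) (h i)) ->
  HasSum P (fun a => lsum (fun i => F i a) Li) (lsum h Li).
Proof.
  induction Li as [|i Li IH]; simpl; intros Hpos Hs.
  - apply HasSum_zero.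
  - apply HasSum_plus; auto.
    intros a Ha. apply lsum_nonneg. intros j Hj. apply Hpos; auto.
Qed.

Lemma HasSum_reindex {A B} (P : A -> Prop) (Q : B -> Prop) (phi : B -> A) (psi : A -> B) f s :
  (forall b, Q b -> P (phi b)) -> (forall a, P a -> Q (psi a)) ->
  (forall b, Q b -> psi (phi b) = b) -> (forall a, P a -> phi (psi a) = a) ->
  HasSum P f s -> HasSum Q (fun b => f (phi b)) s.
Proof.
  intros Hphi Hpsi Hpsiphi Hphipsi Hs. split.
  - intros x [L [Hnd [HL ->]]]. rewrite Forall_forall in HL. rewrite <- lsum_map.
    apply (HasSum_lsum_le P f s); auto.
    + apply NoDup_map_NoDup_ForallPairs; auto. intros x y Hx Hy E.
      rewrite <- (Hpsiphi x), <- (Hpsiphi y), E; auto.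
    + apply Forall_forall. intros a Ha. apply in_map_iff in Ha as [b [<- Hb]]. auto.
  - intros b Hb. apply (HasSum_le_bound P f s); auto. intros L Hnd HL.
    rewrite Forall_forall in HL.
    replace (lsum f L) with (lsum (fun b => f (phi b)) (map psi L)).
    2:{ rewrite lsum_map. apply lsum_ext. intros a Ha. rewrite Hphipsi; auto. }
    apply Hb. exists (map psi L). repeat split.
    + apply NoDup_map_NoDup_ForallPairs; auto. intros x y Hx Hy E.
      rewrite <- (Hphipsi x), <- (Hphipsi y), E; auto.
    + apply Forall_forall. intros a Ha. apply in_map_iff in Ha as [b' [<- Hb']]. auto.
Qed.

Section Tonelli.
Context {A B : Type} (PA : A -> Prop) (PB : B -> Prop) (F : A -> B -> R) (h : B -> R) (S : R).
Hypothesis F_nonneg : forall x y, PA x -> PB y -> 0 <= F x y.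
Hypothesis HasSum_column : forall y, PB y -> HasSum PA (fun x => F x y) (h y).
Hypothesis HasSum_h : HasSum PB h S.

Lemma HasSum_swap_inner x : PA x -> HasSum PB (F x) (nnsum PB (F x)).
Proof.
  intros Hx. apply (HasSum_dominated PB (F x) h S); auto.
  intros y Hy. apply (HasSum_point PA (fun x => F x y)); auto.
Qed.

Lemma HasSum_swap : HasSum PA (fun x => nnsum PB (F x)) S.
Proof.
  split.
  - intros v [Lx [Hnd [HLx ->]]]. rewrite Forall_forall in HLx.
    assert (Hrow : HasSum PB (fun y => lsum (fun x => F x y) Lx)
                     (lsum (fun x => nnsum PB (F x)) Lx)).
    { apply HasSum_lsum; auto using HasSum_swap_inner. }
    eapply HasSum_le_compat; [|exact Hrow|exact HasSum_h]. intros y Hy.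
    apply (HasSum_lsum_le PA (fun x => F x y)); auto. apply Forall_forall; auto.
  - intros b Hb. apply (HasSum_le_bound PB h S); auto. intros Ly Hnd HLy.
    rewrite Forall_forall in HLy.
    assert (Hcol : HasSum PA (fun x => lsum (fun y => F x y) Ly) (lsum h Ly)).
    { apply (HasSum_lsum PA (fun y x => F x y)); auto. }
    apply (HasSum_le_bound PA _ _ b Hcol). intros Lx Hndx HLx.
    apply Rle_trans with (lsum (fun x => nnsum PB (F x)) Lx).
    + rewrite Forall_forall in HLx. apply lsum_le. intros x Hx.
      apply (HasSum_lsum_le PB); auto using HasSum_swap_inner. apply Forall_forall; auto.
    + apply Hb. exists Lx; auto.
Qed.

End Tonelli.

Lemma HasSum_finite_support (f : nat -> R) n :
  (forall k, 0 <= f k) -> (forall k, (n < k)%nat -> f k = 0) ->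
  HasSum (fun _ => True) f (lsum f (seq 0 (S n))).
Proof.
  intros Hpos Hzero. split.
  - intros v [L [Hnd [_ ->]]].
    apply Rle_trans with (lsum f (filter (fun k => (k <=? n)%nat) L)).
    + induction L as [|k L IH]; simpl; [lra|]. inversion Hnd; subst.
      destruct (k <=? n)%nat eqn:E; simpl.
      * specialize (IH H2). lra.
      * apply Nat.leb_gt in E. rewrite Hzero by exact E. specialize (IH H2). lra.
    + apply lsum_incl; auto using NoDup_filter.
      intros k Hk. apply filter_In in Hk as [_ Hk]. apply Nat.leb_le in Hk. apply in_seq. lia.
  - intros b Hb. apply Hb. exists (seq 0 (S n)). repeat split; [apply seq_NoDup|].
    apply Forall_forall; auto.
Qed.

Fixpoint vadd (x y : list Z) : list Z :=
  match x, y with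
  | a :: x', b :: y' => (a + b)%Z :: vadd x' y'
  | _, _ => nil
  end.

Definition znorm2 (x : list Z) : R := sqnormR (toR x).

Definition pos_part (u : R) : R := Rmax u 0.
Definition neg_part (u : R) : R := Rmax (- u) 0.

Lemma pos_part_ge0 u : 0 <= pos_part u. Proof. apply Rmax_r. Qed.
Lemma neg_part_ge0 u : 0 <= neg_part u. Proof. apply Rmax_r. Qed.

Lemma Zd_vsub d x y : Zd d x -> Zd d y -> Zd d (vsub x y).
Proof.
  unfold Zd. revert y d; induction x; destruct y, d; simpl; try easy.
  intros Hx Hy. f_equal. auto.
Qed.

Lemma Zd_vadd d x y : Zd d x -> Zd d y -> Zd d (vadd x y).
Proof.
  unfold Zd. revert y d; induction x; destruct y, d; simpl; try easy.
  intros Hx Hy. f_equal. auto.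
Qed.

Lemma vsub_vadd z y : length z = length y -> vsub (vadd z y) y = z.
Proof.
  revert y; induction z; destruct y; simpl; intros H; try discriminate; auto.
  f_equal; [lia | auto].
Qed.

Lemma vadd_vsub x y : length x = length y -> vadd (vsub x y) y = x.
Proof.
  revert y; induction x; destruct y; simpl; intros H; try discriminate; auto.
  f_equal; [lia | auto].
Qed.

Lemma znorm2_ge0 x : 0 <= znorm2 x.
Proof.
  induction x; unfold znorm2; simpl; [lra|].
  fold (znorm2 x). pose proof (pow2_ge_0 (IZR a)). lra.
Qed.

Lemma znorm_sqr x : znorm x ^ 2 = znorm2 x.
Proof. apply pow2_sqrt, znorm2_ge0. Qed.

Lemma znorm2_zerov d : znorm2 (zerov d) = 0.
Proof.
  induction d; [reflexivity|].
  change (IZR 0 ^ 2 + znorm2 (zerov d) = 0). rewrite IHd. simpl. ring.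
Qed.

Lemma znorm2_coord x : znorm2 x = lsum (fun i => coord x i ^ 2) (seq 0 (length x)).
Proof.
  induction x; [reflexivity|].
  simpl length. rewrite <- cons_seq, <- seq_shift. simpl lsum. rewrite lsum_map.
  change (IZR a ^ 2 + znorm2 x
          = coord (a :: x) 0 ^ 2 + lsum (fun i => coord x i ^ 2) (seq 0 (length x))).
  rewrite <- IHx. reflexivity.
Qed.

Lemma coord_vadd z y i : length z = length y -> coord (vadd z y) i = coord z i + coord y i.
Proof.
  unfold coord. revert y i; induction z; destruct y; simpl; intros i H; try discriminate.
  - destruct i; simpl; lra.
  - destruct i; simpl; [apply plus_IZR | apply IHz; lia].
Qed.

(* The inner product z.y equals dot_plus d z y - dot_minus d z y; both parts are
   nonnegative, so the cross term of |z + y|^2 can be summed as nonnegative series. *)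
Definition dot_plus d (z y : list Z) : R :=
  lsum (fun i => pos_part (coord z i) * pos_part (coord y i)
                 + neg_part (coord z i) * neg_part (coord y i)) (seq 0 d).

Definition dot_minus d (z y : list Z) : R :=
  lsum (fun i => neg_part (coord z i) * pos_part (coord y i)
                 + pos_part (coord z i) * neg_part (coord y i)) (seq 0 d).

Lemma dot_minus_ge0 d z y : 0 <= dot_minus d z y.
Proof.
  apply lsum_nonneg. intros i _.
  pose proof (pos_part_ge0 (coord z i)). pose proof (neg_part_ge0 (coord z i)).
  pose proof (pos_part_ge0 (coord y i)). pose proof (neg_part_ge0 (coord y i)). nra.
Qed.

Lemma dot_plus_ge0 d z y : 0 <= dot_plus d z y.
Proof.
  apply lsum_nonneg. intros i _.
  pose proof (pos_part_ge0 (coord z i)). pose proof (neg_part_ge0 (coord z i)).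
  pose proof (pos_part_ge0 (coord y i)). pose proof (neg_part_ge0 (coord y i)). nra.
Qed.

Lemma znorm2_vadd d z y : Zd d z -> Zd d y ->
  znorm2 (vadd z y) + 2 * dot_minus d z y = znorm2 z + znorm2 y + 2 * dot_plus d z y.
Proof.
  unfold Zd. intros Hz Hy.
  assert (Hzy : length (vadd z y) = d) by (apply (Zd_vadd d); auto).
  rewrite !znorm2_coord, Hzy, Hz, Hy. unfold dot_plus, dot_minus.
  rewrite <- !lsum_scal, <- !lsum_plus. apply lsum_ext. intros i _.
  rewrite coord_vadd by lia. unfold pos_part, neg_part.
  destruct (Rle_or_lt 0 (coord z i)), (Rle_or_lt 0 (coord y i));
    repeat first [rewrite Rmax_left by lra | rewrite Rmax_right by lra]; ring.
Qed.

Lemma HasSum_shift d f s y :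
  Zd d y -> HasSum (Zd d) f s -> HasSum (Zd d) (fun x => f (vsub x y)) s.
Proof.
  intros Hy. apply (HasSum_reindex (Zd d) (Zd d) (fun x => vsub x y) (fun z => vadd z y)).
  - intros x Hx. apply Zd_vsub; auto.
  - intros z Hz. apply Zd_vadd; auto.
  - intros x Hx. apply vadd_vsub. unfold Zd in *; lia.
  - intros z Hz. apply vsub_vadd. unfold Zd in *; lia.
Qed.

(** * Second moments and convolution *)

Definition mass d (f : list Z -> R) : R := nnsum (Zd d) f.

Definition sqmoment d (f : list Z -> R) : R := nnsum (Zd d) (fun x => znorm2 x * f x).

Record sqmoment_le (d : nat) (B : R) (f : list Z -> R) : Prop := {
  sqm_nonneg : forall x, Zd d x -> 0 <= f x;
  sqm_mass : HasSum (Zd d) f (mass d f);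
  sqm_sqmoment : HasSum (Zd d) (fun x => znorm2 x * f x) (sqmoment d f);
  sqm_bound : sqmoment d f <= B * mass d f }.

Lemma sqmoment_le_intro d B f m q :
  (forall x, Zd d x -> 0 <= f x) -> HasSum (Zd d) f m ->
  HasSum (Zd d) (fun x => znorm2 x * f x) q -> q <= B * m -> sqmoment_le d B f.
Proof.
  intros Hpos Hm Hq Hqm.
  split; unfold mass, sqmoment; rewrite ?(nnsum_eq _ _ _ Hm), ?(nnsum_eq _ _ _ Hq); auto.
Qed.

Definition centered d (f : list Z -> R) : Prop :=
  forall i, (i < d)%nat -> exists s,
    HasSum (Zd d) (fun y => pos_part (coord y i) * f y) s /\
    HasSum (Zd d) (fun y => neg_part (coord y i) * f y) s.

Lemma sqmoment_le_scal d B a f :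
  0 <= a -> sqmoment_le d B f -> sqmoment_le d B (fun x => a * f x).
Proof.
  intros Ha [Hpos Hmass Hsq Hbound].
  apply (sqmoment_le_intro d B _ (a * mass d f) (a * sqmoment d f)).
  - intros x Hx. pose proof (Hpos x Hx). nra.
  - apply HasSum_scal; auto.
  - eapply HasSum_ext; [|apply (HasSum_scal _ a); eauto]. intros x _. simpl. ring.
  - apply Rmult_le_compat_l with (r := a) in Hbound; [lra | exact Ha].
Qed.

Lemma centered_scal d a f : 0 <= a -> centered d f -> centered d (fun x => a * f x).
Proof.
  intros Ha Hf i Hi. destruct (Hf i Hi) as [s [Hp Hn]]. exists (a * s).
  split.
  - eapply HasSum_ext; [|apply (HasSum_scal _ a _ _ Ha Hp)]. intros y _. simpl. ring.
  - eapply HasSum_ext; [|apply (HasSum_scal _ a _ _ Ha Hn)]. intros y _. simpl. ring.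
Qed.

Lemma sqmoment_le_lsum {I} d B (F : I -> list Z -> R) Li :
  (forall i, In i Li -> sqmoment_le d B (F i)) ->
  sqmoment_le d B (fun x => lsum (fun i => F i x) Li).
Proof.
  intros HF.
  assert (Hmass : HasSum (Zd d) (fun x => lsum (fun i => F i x) Li)
                    (lsum (fun i => mass d (F i)) Li)).
  { apply HasSum_lsum; intros i Hi; [apply HF; auto | apply (sqm_mass _ _ _ (HF i Hi))]. }
  assert (Hsq : HasSum (Zd d) (fun x => znorm2 x * lsum (fun i => F i x) Li)
                  (lsum (fun i => sqmoment d (F i)) Li)).
  { eapply HasSum_ext; [|apply (HasSum_lsum _ (fun i x => znorm2 x * F i x))].
    - intros x _. simpl. rewrite <- lsum_scal. reflexivity.
    - intros i Hi x Hx. apply Rmult_le_pos; [apply znorm2_ge0 | apply (HF i Hi); auto].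
    - intros i Hi. apply (sqm_sqmoment _ _ _ (HF i Hi)). }
  eapply sqmoment_le_intro; [|exact Hmass|exact Hsq|].
  - intros x Hx. apply lsum_nonneg. intros i Hi. apply (HF i Hi), Hx.
  - rewrite <- lsum_scal. apply lsum_le. intros i Hi. apply (sqm_bound _ _ _ (HF i Hi)).
Qed.

Lemma HasSum_coord_parts d (l : list Z -> R) (a b : nat -> R) :
  (forall y, Zd d y -> 0 <= l y) -> centered d l ->
  (forall i, 0 <= a i) -> (forall i, 0 <= b i) ->
  HasSum (Zd d)
    (fun y => lsum (fun i => a i * pos_part (coord y i) + b i * neg_part (coord y i)) (seq 0 d)
              * l y)
    (lsum (fun i => (a i + b i) * nnsum (Zd d) (fun y => pos_part (coord y i) * l y)) (seq 0 d)).
Proof.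
  intros Hl Hc Ha Hb.
  eapply HasSum_ext; [|apply (HasSum_lsum _ (fun i y =>
    a i * (pos_part (coord y i) * l y) + b i * (neg_part (coord y i) * l y)))].
  - intros y _. simpl. rewrite (Rmult_comm _ (l y)), <- lsum_scal.
    apply lsum_ext. intros i _. ring.
  - intros i _ y Hy. pose proof (Hl y Hy). pose proof (Ha i). pose proof (Hb i).
    pose proof (pos_part_ge0 (coord y i)). pose proof (neg_part_ge0 (coord y i)).
    apply Rplus_le_le_0_compat; apply Rmult_le_pos; try apply Rmult_le_pos; auto.
  - intros i Hi. apply in_seq in Hi. destruct (Hc i ltac:(lia)) as [s [Hp Hn]].
    rewrite (nnsum_eq _ _ _ Hp), Rmult_plus_distr_r.
    apply HasSum_plus; try (apply HasSum_scal; auto); intros y Hy;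
      pose proof (Hl y Hy); pose proof (Ha i); pose proof (Hb i);
      pose proof (pos_part_ge0 (coord y i)); pose proof (neg_part_ge0 (coord y i));
      repeat apply Rmult_le_pos; auto.
Qed.

Lemma HasSum_dot_parts d (l : list Z -> R) z :
  (forall y, Zd d y -> 0 <= l y) -> centered d l -> exists E,
    HasSum (Zd d) (fun y => dot_plus d z y * l y) E /\
    HasSum (Zd d) (fun y => dot_minus d z y * l y) E.
Proof.
  intros Hl Hc.
  exists (lsum (fun i => (pos_part (coord z i) + neg_part (coord z i))
                         * nnsum (Zd d) (fun y => pos_part (coord y i) * l y)) (seq 0 d)).
  split.
  - apply HasSum_coord_parts; auto using pos_part_ge0, neg_part_ge0.
  - rewrite (lsum_ext _ (fun i => (neg_part (coord z i) + pos_part (coord z i))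
                                  * nnsum (Zd d) (fun y => pos_part (coord y i) * l y)))
      by (intros; ring).
    apply HasSum_coord_parts; auto using pos_part_ge0, neg_part_ge0.
Qed.

Lemma HasSum_sqnorm_vadd d (l : list Z -> R) w V z :
  (forall y, Zd d y -> 0 <= l y) -> centered d l -> HasSum (Zd d) l w ->
  HasSum (Zd d) (fun y => znorm2 y * l y) V -> Zd d z ->
  HasSum (Zd d) (fun y => znorm2 (vadd z y) * l y) (w * znorm2 z + V).
Proof.
  intros Hl Hc Hw HV Hz.
  destruct (HasSum_dot_parts d l z Hl Hc) as [E [Hplus Hminus]].
  assert (Hrhs : HasSum (Zd d) (fun y => (znorm2 z + znorm2 y + 2 * dot_plus d z y) * l y)
                   (w * znorm2 z + V + 2 * E)).
  { pose proof (znorm2_ge0 z).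
    assert (Hzw : HasSum (Zd d) (fun y => znorm2 z * l y) (w * znorm2 z)).
    { rewrite Rmult_comm. apply HasSum_scal; auto. }
    assert (H2E : HasSum (Zd d) (fun y => 2 * (dot_plus d z y * l y)) (2 * E))
      by (apply HasSum_scal; auto; lra).
    eapply HasSum_ext;
      [|apply HasSum_plus; [| |apply HasSum_plus; [| |exact Hzw|exact HV]|exact H2E]].
    - intros y _. simpl. ring.
    - intros y Hy. pose proof (Hl y Hy). pose proof (znorm2_ge0 y). nra.
    - intros y Hy. pose proof (Hl y Hy). pose proof (dot_plus_ge0 d z y). nra.
    - intros y Hy. pose proof (Hl y Hy). nra.
    - intros y Hy. pose proof (Hl y Hy). pose proof (znorm2_ge0 y). nra. }
  assert (Hsum : HasSum (Zd d) (fun y => znorm2 (vadd z y) * l y)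
                   (nnsum (Zd d) (fun y => znorm2 (vadd z y) * l y))).
  { eapply HasSum_dominated; [|exact Hrhs]. intros y Hy.
    pose proof (znorm2_vadd d z y Hz Hy). pose proof (dot_minus_ge0 d z y).
    pose proof (Hl y Hy). nra. }
  assert (Heq : nnsum (Zd d) (fun y => znorm2 (vadd z y) * l y) + 2 * E = w * znorm2 z + V + 2 * E).
  { eapply HasSum_unique; [|exact Hrhs].
    eapply HasSum_ext;
      [|apply HasSum_plus; [| |exact Hsum|apply (HasSum_scal _ 2); [lra|exact Hminus]]].
    - intros y Hy. simpl. rewrite <- (znorm2_vadd d z y Hz Hy). ring.
    - intros y Hy. pose proof (Hl y Hy). pose proof (znorm2_ge0 (vadd z y)). nra.
    - intros y Hy. pose proof (Hl y Hy). pose proof (dot_minus_ge0 d z y). nra. }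
  replace (w * znorm2 z + V) with (nnsum (Zd d) (fun y => znorm2 (vadd z y) * l y)) by lra.
  exact Hsum.
Qed.

Definition zconv d (l c : list Z -> R) (x : list Z) : R :=
  nnsum (Zd d) (fun y => l y * c (vsub x y)).

Section Convolution.
Variables (d : nat) (B B' : R) (l c : list Z -> R).
Hypothesis l_sqm : sqmoment_le d B' l.
Hypothesis l_centered : centered d l.
Hypothesis c_sqm : sqmoment_le d B c.

Lemma zconv_summand_nonneg x y : Zd d x -> Zd d y -> 0 <= l y * c (vsub x y).
Proof.
  intros Hx Hy.
  apply Rmult_le_pos; [apply (sqm_nonneg _ _ _ l_sqm) | apply (sqm_nonneg _ _ _ c_sqm)];
    auto using Zd_vsub.
Qed.

Lemma HasSum_zconv_column y :
  Zd d y -> HasSum (Zd d) (fun x => l y * c (vsub x y)) (l y * mass d c).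
Proof.
  intros Hy. apply HasSum_scal; [apply (sqm_nonneg _ _ _ l_sqm); auto|].
  apply HasSum_shift; auto. apply (sqm_mass _ _ _ c_sqm).
Qed.

Lemma HasSum_zconv_row_mass : HasSum (Zd d) (fun y => l y * mass d c) (mass d l * mass d c).
Proof.
  rewrite Rmult_comm.
  eapply HasSum_ext; [|apply (HasSum_scal _ (mass d c)), (sqm_mass _ _ _ l_sqm)].
  - intros y _. simpl. ring.
  - apply (HasSum_ge0 _ _ _ (sqm_mass _ _ _ c_sqm)).
Qed.

Lemma HasSum_zconv_summand x :
  Zd d x -> HasSum (Zd d) (fun y => l y * c (vsub x y)) (zconv d l c x).
Proof.
  apply (HasSum_swap_inner (Zd d) (Zd d) _ _ _ zconv_summand_nonneg HasSum_zconv_column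
           HasSum_zconv_row_mass).
Qed.

Lemma HasSum_zconv : HasSum (Zd d) (zconv d l c) (mass d l * mass d c).
Proof.
  exact (HasSum_swap (Zd d) (Zd d) _ _ _ zconv_summand_nonneg HasSum_zconv_column
           HasSum_zconv_row_mass).
Qed.

Lemma HasSum_zconv_sqmoment :
  HasSum (Zd d) (fun x => znorm2 x * zconv d l c x)
    (mass d l * sqmoment d c + sqmoment d l * mass d c).
Proof.
  destruct l_sqm as [l_nonneg l_mass l_sqmoment _].
  destruct c_sqm as [c_nonneg c_mass c_sqmoment _].
  set (G := fun y z => l y * (znorm2 (vadd z y) * c z)).
  assert (G_nonneg : forall y z, Zd d y -> Zd d z -> 0 <= G y z).
  { intros y z Hy Hz. unfold G. pose proof (l_nonneg y Hy). pose proof (c_nonneg z Hz).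
    pose proof (znorm2_ge0 (vadd z y)). apply Rmult_le_pos; [|apply Rmult_le_pos]; auto. }
  assert (HG_column : forall z, Zd d z -> HasSum (Zd d) (fun y => G y z)
                        (c z * (mass d l * znorm2 z + sqmoment d l))).
  { intros z Hz. eapply HasSum_ext;
      [|apply HasSum_scal, HasSum_sqnorm_vadd; auto; apply c_nonneg; auto].
    intros y _. unfold G. simpl. ring. }
  assert (HG_total : HasSum (Zd d) (fun z => c z * (mass d l * znorm2 z + sqmoment d l))
                       (mass d l * sqmoment d c + sqmoment d l * mass d c)).
  { pose proof (HasSum_ge0 _ _ _ l_mass). pose proof (HasSum_ge0 _ _ _ l_sqmoment).
    eapply HasSum_ext; [|apply HasSum_plus;
      [| |apply (HasSum_scal _ (mass d l)), c_sqmoment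
         |apply (HasSum_scal _ (sqmoment d l)), c_mass]];
      auto.
    - intros z _. simpl. ring.
    - intros z Hz. repeat apply Rmult_le_pos; auto using znorm2_ge0.
    - intros z Hz. apply Rmult_le_pos; auto. }
  set (h := fun y => nnsum (Zd d) (G y)).
  assert (HG_row : forall y, Zd d y -> HasSum (Zd d) (G y) (h y))
    by exact (HasSum_swap_inner (Zd d) (Zd d) G _ _ G_nonneg HG_column HG_total).
  pose proof (HasSum_swap (Zd d) (Zd d) G _ _ G_nonneg HG_column HG_total) as Hh.
  (* Substituting z = x - y turns the x-sum of |x|^2 l(y) c(x - y) into the z-sum of G y z. *)
  assert (Hx_column : forall y, Zd d y ->
            HasSum (Zd d) (fun x => znorm2 x * (l y * c (vsub x y))) (h y)).
  { intros y Hy. eapply HasSum_ext; [|exact (HasSum_shift d _ _ y Hy (HG_row y Hy))].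
    intros x Hx. unfold G. rewrite vadd_vsub by (unfold Zd in *; lia). ring. }
  assert (F_nonneg : forall x y, Zd d x -> Zd d y -> 0 <= znorm2 x * (l y * c (vsub x y))).
  { intros x y Hx Hy. apply Rmult_le_pos; [apply znorm2_ge0 | apply zconv_summand_nonneg; auto]. }
  eapply HasSum_ext; [|apply (HasSum_swap (Zd d) (Zd d) _ _ _ F_nonneg Hx_column Hh)].
  intros x Hx. apply nnsum_eq, HasSum_scal; [apply znorm2_ge0|]. apply HasSum_zconv_summand, Hx.
Qed.

Lemma zconv_sqmoment_le : sqmoment_le d (B + B') (zconv d l c).
Proof.
  pose proof (HasSum_ge0 _ _ _ (sqm_mass _ _ _ l_sqm)).
  pose proof (HasSum_ge0 _ _ _ (sqm_mass _ _ _ c_sqm)).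
  pose proof (sqm_bound _ _ _ l_sqm). pose proof (sqm_bound _ _ _ c_sqm).
  apply (sqmoment_le_intro _ _ _ _ _ (fun x Hx => HasSum_ge0 _ _ _ (HasSum_zconv_summand x Hx))
           HasSum_zconv HasSum_zconv_sqmoment).
  nra.
Qed.

End Convolution.

(** * The walk (tau_k, S_k) *)

Section Renewal.
Variables (d : nat) (r : nat -> R) (p : nat -> list Z -> R) (N : nat) (K lam : R).
Hypothesis K_ge0 : 0 <= K.
Hypothesis lam_gt0 : 0 < lam.
Hypothesis law_regular : forall m, (1 <= m)%nat ->
  sqmoment_le d (K * INR m) (law r p N m) /\ centered d (law r p N m).

Lemma conv_sqmoment_le k n : sqmoment_le d (K * INR n) (conv d r p N k n).
Proof.
  revert n; induction k as [|k IH]; intros n.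
  - destruct (Nat.eq_dec n 0) as [->|Hn]; simpl conv; [|destruct (Nat.eq_dec n 0); [lia|]].
    + apply (sqmoment_le_intro _ _ _ 1 0).
      * intros x _. destruct (list_eq_dec Z.eq_dec x (zerov d)); lra.
      * assert (Hsingle := HasSum_single (Zd d)
          (fun x => if list_eq_dec Z.eq_dec x (zerov d) then 1 else 0) (zerov d)).
        cbv beta in Hsingle.
        destruct (list_eq_dec Z.eq_dec (zerov d) (zerov d)); [|tauto].
        apply Hsingle; [|lra|apply repeat_length].
        intros x _ Hx. destruct (list_eq_dec Z.eq_dec x (zerov d)); tauto.
      * eapply HasSum_ext; [|apply HasSum_zero]. intros x _.
        simpl. destruct (list_eq_dec Z.eq_dec x (zerov d)) as [->|]; [rewrite znorm2_zerov|]; ring.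
      * simpl. lra.
    + apply (sqmoment_le_intro _ _ _ 0 0); [intros; lra | apply HasSum_zero | | lra].
      eapply HasSum_ext; [|apply HasSum_zero]. intros x _. simpl. ring.
  - change (sqmoment_le d (K * INR n)
              (fun x => lsum (fun m => zconv d (law r p N m) (conv d r p N k (n - m)) x)
                          (seq 1 n))).
    apply sqmoment_le_lsum. intros m Hm. apply in_seq in Hm.
    destruct (law_regular m ltac:(lia)) as [Hsqm Hc].
    replace (K * INR n) with (K * INR (n - m) + K * INR m) by (rewrite minus_INR by lia; ring).
    apply zconv_sqmoment_le; auto.
Qed.

Lemma conv_eq_0 k n x : (n < k)%nat -> Zd d x -> conv d r p N k n x = 0.
Proof.
  revert n x; induction k as [|k IH]; intros n x Hn Hx; [lia|].
  change (lsum (fun m => zconv d (law r p N m) (conv d r p N k (n - m)) x) (seq 1 n) = 0).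
  rewrite <- (lsum_zero (seq 1 n)). apply lsum_ext. intros m Hm. apply in_seq in Hm.
  apply nnsum_eq. eapply HasSum_ext; [|apply HasSum_zero].
  intros y Hy. simpl. rewrite IH; [ring | lia | apply Zd_vsub; auto].
Qed.

Lemma HasSum_Ubold n x : Zd d x ->
  HasSum (fun _ => True) (fun k => lam ^ k * conv d r p N k n x) (Ubold d r p N lam n x).
Proof.
  intros Hx. apply (HasSum_nnsum _ _ (lsum (fun k => lam ^ k * conv d r p N k n x) (seq 0 (S n)))).
  apply HasSum_finite_support.
  - intros k. apply Rmult_le_pos; [apply pow_le; lra | apply (conv_sqmoment_le k n); auto].
  - intros k Hk. rewrite conv_eq_0 by auto. ring.
Qed.

Lemma HasSum_Uscal n :
  HasSum (fun _ => True) (fun k => lam ^ k * mass d (conv d r p N k n)) (Uscal d r p N lam n).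
Proof.
  apply (HasSum_nnsum _ _ (lsum (fun k => lam ^ k * mass d (conv d r p N k n)) (seq 0 (S n)))).
  apply HasSum_finite_support.
  - intros k. apply Rmult_le_pos; [apply pow_le; lra|].
    apply (HasSum_ge0 _ _ _ (sqm_mass _ _ _ (conv_sqmoment_le k n))).
  - intros k Hk. unfold mass. rewrite (nnsum_eq _ _ 0); [ring|].
    eapply HasSum_ext; [|apply HasSum_zero]. intros x Hx. rewrite conv_eq_0; auto.
Qed.

Lemma Ubold_sqmoment_le n L : NoDup L -> Forall (Zd d) L ->
  lsum (fun x => znorm2 x * Ubold d r p N lam n x) L <= K * INR n * Uscal d r p N lam n.
Proof.
  intros Hnd HL. rewrite Forall_forall in HL.
  assert (Hlhs : HasSum (fun _ => True)
            (fun k => lsum (fun x => znorm2 x * (lam ^ k * conv d r p N k n x)) L)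
            (lsum (fun x => znorm2 x * Ubold d r p N lam n x) L)).
  { apply (HasSum_lsum _ (fun x k => znorm2 x * (lam ^ k * conv d r p N k n x))).
    - intros x Hx k _. apply Rmult_le_pos; [apply znorm2_ge0|].
      apply Rmult_le_pos; [apply pow_le; lra | apply (conv_sqmoment_le k n); auto].
    - intros x Hx. apply HasSum_scal; [apply znorm2_ge0 | apply HasSum_Ubold; auto]. }
  assert (Hrhs : HasSum (fun _ => True)
            (fun k => K * INR n * (lam ^ k * mass d (conv d r p N k n)))
            (K * INR n * Uscal d r p N lam n)).
  { apply HasSum_scal; [apply Rmult_le_pos; auto using pos_INR | apply HasSum_Uscal]. }
  eapply HasSum_le_compat; [|exact Hlhs|exact Hrhs]. intros k _.
  destruct (conv_sqmoment_le k n) as [_ _ Hsq Hbound].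
  rewrite (lsum_ext _ (fun x => lam ^ k * (znorm2 x * conv d r p N k n x))) by (intros; ring).
  rewrite lsum_scal.
  assert (lsum (fun x => znorm2 x * conv d r p N k n x) L <= sqmoment d (conv d r p N k n))
    by (apply (HasSum_lsum_le _ _ _ L Hsq Hnd), Forall_forall; auto).
  pose proof (pow_lt lam k lam_gt0). nra.
Qed.

Lemma Ubold_tail_le n M L :
  0 < M -> 0 < Uscal d r p N lam n -> NoDup L ->
  Forall (fun x => Zd d x /\ znorm x > M * sqrt (INR n)) L ->
  lsum (fun x => Ubold d r p N lam n x / Uscal d r p N lam n) L <= K / M ^ 2.
Proof.
  intros HM HU Hnd HL. set (U := Uscal d r p N lam n) in *.
  assert (HLd : Forall (Zd d) L) by (apply (Forall_impl _ (fun x Hx => proj1 Hx) HL)).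
  rewrite Forall_forall in HL.
  rewrite (lsum_ext _ (fun x => / U * Ubold d r p N lam n x)) by (intros; unfold Rdiv; ring).
  rewrite lsum_scal.
  assert (HM2 : 0 < M ^ 2) by (apply pow_lt; lra).
  assert (Htail : lsum (fun x => Ubold d r p N lam n x) L <= K * U / M ^ 2).
  { apply (lsum_markov _ znorm2 L (M ^ 2 * INR n)).
    - apply Rmult_le_pos; [lra | apply pos_INR].
    - apply Rmult_le_pos; [apply Rmult_le_pos; lra | apply Rlt_le, Rinv_0_lt_compat; lra].
    - intros x Hx. destruct (HL x Hx) as [Hxd Hgt]. split.
      + apply (HasSum_ge0 _ _ _ (HasSum_Ubold n x Hxd)).
      + rewrite <- znorm_sqr.
        replace (M ^ 2 * INR n) with ((M * sqrt (INR n)) ^ 2)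
          by (rewrite Rpow_mult_distr, pow2_sqrt; auto using pos_INR).
        assert (0 <= M * sqrt (INR n)) by (apply Rmult_le_pos; [lra | apply sqrt_pos]).
        nra.
    - eapply Rle_trans; [apply Ubold_sqmoment_le; auto|]. right. unfold U. field. lra. }
  apply (Rmult_le_compat_l (/ U)) in Htail; [|apply Rlt_le, Rinv_0_lt_compat; lra].
  replace (/ U * (K * U / M ^ 2)) with (K / M ^ 2) in Htail by (field; lra).
  exact Htail.
Qed.

End Renewal.

Definition law_weight (r : nat -> R) (N m : nat) : R :=
  if ((1 <=? m)%nat && (m <=? N)%nat)%bool then r m / RN r N else 0.

Lemma law_eq r p N m : law r p N m = fun y => law_weight r N m * p m y.
Proof.
  apply functional_extensionality. intros y. unfold law, law_weight.
  destruct (_ && _)%bool; unfold Rdiv; ring.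
Qed.

Lemma law_weight_ge0 r N m :
  (forall n, (1 <= n)%nat -> 0 < r n) -> (1 <= N)%nat -> 0 <= law_weight r N m.
Proof.
  intros Hr HN. unfold law_weight.
  destruct (1 <=? m)%nat eqn:Hm; simpl; [|lra]. destruct (m <=? N)%nat; [|lra].
  apply Nat.leb_le in Hm. apply Rlt_le, Rdiv_lt_0_compat; auto.
  unfold RN. destruct N as [|N]; [lia|]. simpl.
  pose proof (Hr 1%nat (le_n 1)).
  assert (0 <= lsum r (seq 2 N)).
  { apply lsum_nonneg. intros k Hk. apply in_seq in Hk. apply Rlt_le, Hr. lia. }
  lra.
Qed.

Lemma sqmoment_le_prob d B f :
  (forall x, Zd d x -> 0 <= f x) -> HasSum (Zd d) f 1 ->
  fsum_le (Zd d) (fun x => znorm x ^ 2 * f x) B -> sqmoment_le d B f.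
Proof.
  intros Hpos Hmass HB. destruct (HasSum_of_fsum_le _ _ _ HB) as [q Hq].
  apply (sqmoment_le_intro d B f 1 q); auto.
  - eapply HasSum_ext; [|exact Hq]. intros x _. cbv beta. rewrite znorm_sqr. reflexivity.
  - rewrite Rmult_1_r. apply (HasSum_le_bound _ _ _ _ Hq HB).
Qed.

Theorem mainTheorem9
  (d : nat) (hd : (1 <= d)%nat) (c : R) (hc : 0 < c)
  (a : R) (ha : 0 < a) (r : nat -> R) (p : nat -> list Z -> R)
  (hr_pos : forall n, (1 <= n)%nat -> 0 < r n)
  (hr_asym : Un_cv (fun n => INR n * r n) a)
  (hp_nonneg : forall n x, Zd d x -> 0 <= p n x)
  (hp_prob : forall n, (1 <= n)%nat -> HasSum (Zd d) (p n) 1)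
  (hp_mean : forall n i, (1 <= n)%nat -> (i < d)%nat ->
      exists s, HasSum (Zd d) (fun x => Rmax (coord x i) 0 * p n x) s /\
                HasSum (Zd d) (fun x => Rmax (- coord x i) 0 * p n x) s)
  (hp_var : exists K, forall n, (1 <= n)%nat ->
      fsum_le (Zd d) (fun x => znorm x ^ 2 * p n x) (K * INR n))
  (hp_lclt : forall eps, 0 < eps -> exists n0, forall n, (n0 <= n)%nat -> (1 <= n)%nat ->
      forall x, Zd d x ->
      Rabs (sqrt (INR n) ^ d * p n x
            - gauss d c (map (fun z => IZR z / sqrt (INR n)) x)) <= eps) :
  exists C, 0 < C /\
    forall (N : nat) (lam : R) (n : nat) (M : R),
      (1 <= N)%nat -> 0 < lam -> 0 < Uscal d r p N lam n -> 0 < M ->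
      fsum_le (fun x => Zd d x /\ znorm x > M * sqrt (INR n))
        (fun x => Ubold d r p N lam n x / Uscal d r p N lam n)
        (C / M ^ 2).
Proof.
  destruct hp_var as [K HK].
  assert (HK0 : 0 <= K).
  { pose proof (HK 1%nat (le_n 1) nil (NoDup_nil _) (Forall_nil _)) as HK1. simpl in HK1. lra. }
  exists (K + 1). split; [lra|].
  intros N lam n M HN Hlam HU HM L Hnd HL.
  assert (Hlaw : forall m, (1 <= m)%nat ->
            sqmoment_le d (K * INR m) (law r p N m) /\ centered d (law r p N m)).
  { intros m Hm. rewrite law_eq. pose proof (law_weight_ge0 r N m hr_pos HN).
    split; [apply sqmoment_le_scal | apply centered_scal]; auto.
    - apply sqmoment_le_prob; auto.
    - intros i Hi. exact (hp_mean m i Hm Hi). }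
  eapply Rle_trans; [exact (Ubold_tail_le d r p N K lam HK0 Hlam Hlaw n M L HM HU Hnd HL)|].
  unfold Rdiv. apply Rmult_le_compat_r; [apply Rlt_le, Rinv_0_lt_compat, pow_lt|]; lra.
Qed.
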